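(* Let $\Omega=\{1,\ldots,n\}$, $k\in\Omega$, and let $\phi$ be a generalized metric satisfying the triangle inequality, i.e. $\phi(x\|y)\le\phi(x\|z)+\phi(z\|y)$ for all distributions $x,y,z$ on a common finite set. Then $\widehat{\phi}_k(p\|q)\le\widehat{\phi}_k(p\|r)+\widehat{\phi}_k(r\|q)$ for all $\Omega$-point distributions $p,q,r$.
   Context: An $\Omega$-point distribution is a probability vector on $\Omega=\{1,\ldots,n\}$. $\phi$ assigns a real number $\phi(p\|q)$ to each pair of probability distributions on the same finite set. $\mathcal P_k(\Omega)$ is the set of partitions of $\Omega$ into exactly $k$ nonempty disjoint cells; for $\rho\in\mathcal P_k(\Omega)$, $\widehat p_\rho(a)=\sum_{i\in a}p(i)$ for $a\in\rho$ defines a distribution on the cells of $\rho$. The Sketch $\star$-metric is $\widehat{\phi}_k(p\|q)=\max_{\rho\in\mathcal P_k(\Omega)}\phi(\widehat p_\rho\|\widehat q_\rho)$. *)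

From HB Require Import structures.
From mathcomp Require Import all_boot all_order all_algebra.
Set Implicit Arguments. Unset Strict Implicit. Unset Printing Implicit Defensive.
Import Order.TTheory GRing.Theory Num.Theory.
Local Open Scope ring_scope.

Definition is_distr (R : realFieldType) (T : finType) (p : T -> R) : Prop :=
  (forall t, 0 <= p t) /\ \sum_(t : T) p t = 1.

(* phi assigns a real number to each pair of functions on the same finite set
   (only its values on distributions are relevant). *)
Definition divergence (R : realFieldType) := forall T : finType, (T -> R) -> (T -> R) -> R.

Definition triangle_ineq (R : realFieldType) (phi : divergence R) : Prop :=
  forall (T : finType) (x y z : T -> R),
    is_distr x -> is_distr y -> is_distr z ->
    phi T x y <= phi T x z + phi T z y.

Definition kpartition (n k : nat) (P : {set {set 'I_n}}) : bool :=
  partition P [set: 'I_n] && (#|P| == k).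

Definition cells (n : nat) (P : {set {set 'I_n}}) : finType :=
  {A : {set 'I_n} | A \in P}.

Definition coarsen (R : realFieldType) (n : nat) (P : {set {set 'I_n}})
  (p : 'I_n -> R) : cells P -> R :=
  fun a => \sum_(i in val a) p i.

Definition sketch_val (R : realFieldType) (phi : divergence R) (n : nat)
  (p q : 'I_n -> R) (P : {set {set 'I_n}}) : R :=
  phi (cells P) (@coarsen R n P p) (@coarsen R n P q).

(* The seed of the max is an element of the (finite) list itself, so this is the
   exact maximum whenever some k-partition exists (i.e. 1 <= k <= n). *)
Definition sketch (R : realFieldType) (phi : divergence R) (n k : nat)
  (p q : 'I_n -> R) : R :=
  let s := [seq sketch_val phi p q P | P <- enum [pred P : {set {set 'I_n}} | kpartition k P]] in
  \big[Num.max/head 0 s]_(x <- s) x.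

From HB Require Import structures.
From mathcomp Require Import all_boot all_order all_algebra.
Set Implicit Arguments. Unset Strict Implicit. Unset Printing Implicit Defensive.
Import Order.TTheory GRing.Theory Num.Theory.
Local Open Scope ring_scope.

(* Coarsening along a partition maps distributions to distributions, so the
   triangle inequality for phi holds partition by partition; and the maximum
   of pointwise sums is at most the sum of the maxima. *)

Definition head_max (R : realDomainType) (s : seq R) : R :=
  \big[Num.max/head 0 s]_(x <- s) x.

Lemma head_max_map_subadd (R : realDomainType) (T : eqType) (L : seq T)
    (f g h : T -> R) :
  (forall x, x \in L -> f x <= g x + h x) ->
  head_max (map f L) <= head_max (map g L) + head_max (map h L).
Proof.
case: L => [|x0 L] fgh; first by rewrite /head_max !big_nil addr0.
rewrite /head_max !big_map /=.
have fx_le x : x \in x0 :: L ->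
    f x <= \big[Num.max/g x0]_(y <- x0 :: L) g y + \big[Num.max/h x0]_(y <- x0 :: L) h y.
  by move=> xL; apply: le_trans (fgh _ xL) _; rewrite lerD ?le_bigmax_seq.
rewrite big_seq; apply: bigmax_le => [|x]; last exact: fx_le.
exact/fx_le/mem_head.
Qed.

Lemma is_distr_coarsen (R : realFieldType) (n : nat) (P : {set {set 'I_n}})
    (p : 'I_n -> R) :
  partition P [set: 'I_n] -> is_distr p -> is_distr (@coarsen R n P p).
Proof.
move=> /and3P[/eqP coverP trivP _] [p_ge0 sum_p]; split=> [a|].
  exact: sumr_ge0.
rewrite /coarsen -(big_sub (mem P) (fun A => \sum_(i in A) p i)).
by rewrite -big_trivIset // coverP -sum_p; apply: eq_bigl => i; rewrite in_setT.
Qed.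

Lemma sketch_val_triangle (R : realFieldType) (phi : divergence R) (n : nat)
    (P : {set {set 'I_n}}) (p q r : 'I_n -> R) :
  triangle_ineq phi -> partition P [set: 'I_n] ->
  is_distr p -> is_distr q -> is_distr r ->
  sketch_val phi p q P <= sketch_val phi p r P + sketch_val phi r q P.
Proof.
by move=> tri_phi partP dp dq dr; apply: tri_phi; apply: is_distr_coarsen.
Qed.

Theorem lemma4 (R : realFieldType) (phi : divergence R) (n k : nat)
  (hk : (1 <= k <= n)%N) (htri : triangle_ineq phi)
  (p q r : 'I_n -> R) (hp : is_distr p) (hq : is_distr q) (hr : is_distr r) :
  sketch phi k p q <= sketch phi k p r + sketch phi k r q.
Proof.
apply: head_max_map_subadd => P; rewrite mem_enum inE => /andP[partP _].
exact: sketch_val_triangle.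
Qed.
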